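(* Let $n, r$ be positive integers and let $G$ be a graph all of whose vertices have degree at least $r$. Then $$m_e(G\square K_n, r)\leqslant\sum_{t=0}^{n-1} m_e(G, r-t),$$ where $m_e(G, i)$ is defined to be $0$ if $i\leqslant0$.
   Context: All graphs are finite, simple and undirected; $K_n$ is the complete graph on $n$ vertices. The Cartesian product $G\square H$ has vertex set $V(G)\times V(H)$, with $(g_1,h_1)$ adjacent to $(g_2,h_2)$ iff either $g_1=g_2$ and $h_1h_2\in E(H)$, or $h_1=h_2$ and $g_1g_2\in E(G)$. Given graphs $G$ and $H$, the $H$-bootstrap percolation process on $G$ starts with a set $E_0\subseteq E(G)$ of initially activated edges, and for $i\geqslant1$, $E_i$ consists of $E_{i-1}$ together with all edges $e\in E(G)$ for which there is a subgraph $H_e$ of $G$ isomorphic to $H$ with $e\in E(H_e)$ and $E(H_e)\setminus\{e\}\subseteq E_{i-1}$. $E_0$ is a percolating set if $\bigcup_{i\geqslant0}E_i=E(G)$; $\mathrm{wsat}(G,H)$ is the minimum size of a percolating set. $m_e(G,r)=\mathrm{wsat}(G,S_{r+1})$, where $S_{r+1}$ is the star on $r+2$ vertices. *)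

From Stdlib Require Import ClassicalEpsilon.
From mathcomp Require Import all_boot.

Set Implicit Arguments.
Unset Strict Implicit.
Unset Printing Implicit Defensive.

(* A (finite simple) graph is given by a vertex finType and an adjacency
   relation; simplicity (symmetric + irreflexive) is assumed where needed. *)

Definition edgeset (T : finType) (adj : rel T) : {set {set T}} :=
  [set [set x; y] | x in T, y in T & adj x y].

Definition Kn (n : nat) : rel 'I_n := fun i j => i != j.
Arguments Kn : clear implicits.

Definition star (k : nat) : rel 'I_k.+1 :=
  fun i j => (i != j) && ((i == ord0) || (j == ord0)).
Arguments star : clear implicits.

Definition cartprod (T U : finType) (adjG : rel T) (adjH : rel U) : rel (T * U) :=
  fun u v => ((u.1 == v.1) && adjH u.2 v.2) || ((u.2 == v.2) && adjG u.1 v.1).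

(* An injective homomorphism f : H -> G; its image is a subgraph of G
   isomorphic to H, with edge set copy_edges. *)
Definition is_copy (TH T : finType) (adjH : rel TH) (adj : rel T)
  (f : {ffun TH -> T}) : bool :=
  injectiveb f && [forall x, forall y, adjH x y ==> adj (f x) (f y)].

Definition copy_edges (TH T : finType) (adjH : rel TH) (f : {ffun TH -> T})
  : {set {set T}} :=
  [set [set f x; f y] | x in TH, y in TH & adjH x y].

Definition bp_step (TH T : finType) (adjH : rel TH) (adj : rel T)
  (E : {set {set T}}) : {set {set T}} :=
  E :|: [set e in edgeset adj |
           [exists f : {ffun TH -> T},
              [&& is_copy adjH adj f, e \in copy_edges adjH f &
                  copy_edges adjH f :\ e \subset E]]].

Definition percolating (TH T : finType) (adjH : rel TH) (adj : rel T)
  (E0 : {set {set T}}) : Prop :=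
  E0 \subset edgeset adj /\
  (forall e, e \in edgeset adj <-> exists i : nat, e \in iter i (bp_step adjH adj) E0).

Definition percolatingb (TH T : finType) (adjH : rel TH) (adj : rel T)
  (E0 : {set {set T}}) : bool :=
  if excluded_middle_informative (percolating adjH adj E0) then true else false.

(* wsat(G, H): minimum size of a percolating set (E(G) itself percolates,
   so |E(G)| is a valid starting value for the min). *)
Definition wsat (TH T : finType) (adjH : rel TH) (adj : rel T) : nat :=
  \big[minn/#|edgeset adj|]_(E0 : {set {set T}} | percolatingb adjH adj E0) #|E0|.

(* m_e(G, i) = wsat(G, S_{i+1}) for i >= 1, and 0 for i <= 0 (i = 0 here,
   since the argument r - t is a truncated natural subtraction). *)
Definition me (T : finType) (adj : rel T) (i : nat) : nat :=
  if i == 0 then 0 else wsat (star i.+1) adj.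

(* Take, for every layer t < n, an optimal percolating set A_t of G for the
   threshold r - t and place a copy of it in the layer G x {t}.  The layers
   become fully active in increasing order of t.  A fully active layer s
   activates every vertical edge (x, s)(x, t), since (x, s) has at least r
   active edges inside layer s.  Hence, once the layers below t are active,
   every vertex of layer t has t active vertical edges, and inside layer t the
   process runs as the threshold-(r - t) process started from A_t. *)

From Stdlib Require Import ClassicalEpsilon.
From mathcomp Require Import all_boot.

Set Implicit Arguments.
Unset Strict Implicit.
Unset Printing Implicit Defensive.

Lemma geq_bigminn_cond (I : finType) (P : pred I) (F : I -> nat) d j :
  P j -> \big[minn/d]_(i | P i) F i <= F j.
Proof.
move=> Pj; have : j \in index_enum I := mem_index_enum j.
elim: (index_enum I) => // i s IH; rewrite inE big_cons => /predU1P [<-|js].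
  by rewrite Pj geq_minl.
by case: ifP => _; [apply: leq_trans (geq_minr _ _) (IH js) | exact: IH].
Qed.

Lemma card_ord_lt n t : t <= n -> #|[set s : 'I_n | s < t]| = t.
Proof.
move=> tn; have -> : [set s : 'I_n | s < t] = widen_ord tn @: [set: 'I_t].
  apply/setP => s; rewrite inE; apply/idP/imsetP => [st|[j _ ->]].
    by exists (Ordinal st) => //; apply: val_inj.
  exact: (ltn_ord j).
by rewrite card_imset ?cardsT ?card_ord // => i j [] /val_inj.
Qed.

Lemma edgesetP (T : finType) (adj : rel T) e :
  reflect (exists x y, adj x y /\ e = [set x; y]) (e \in edgeset adj).
Proof.
apply: (iffP imset2P) => [[x y _]|[x [y [xy ->]]]].
  by rewrite inE => xy ->; exists x, y.
by exists x y; rewrite ?inE.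
Qed.

Section Bootstrap.

Variables (TH T : finType) (adjH : rel TH) (adj : rel T).

Definition activated (E0 : {set {set T}}) (e : {set T}) : Prop :=
  exists i, e \in iter i (bp_step adjH adj) E0.

Lemma bp_step_subset (E : {set {set T}}) : E \subset bp_step adjH adj E.
Proof. exact: subsetUl. Qed.

Lemma iter_bp_step_subset (E : {set {set T}}) i j :
  i <= j -> iter i (bp_step adjH adj) E \subset iter j (bp_step adjH adj) E.
Proof.
move=> /subnK <-; elim: (j - i) => //= k IH.
exact: subset_trans IH (bp_step_subset _).
Qed.

Lemma iter_bp_step_edges (E : {set {set T}}) i :
  E \subset edgeset adj -> iter i (bp_step adjH adj) E \subset edgeset adj.
Proof.
move=> EG; elim: i => //= i IH; apply/subsetP => e /setUP [/(subsetP IH) //|].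
by rewrite inE => /andP [].
Qed.

Lemma activated_seq (E0 : {set {set T}}) (s : seq {set T}) :
  (forall e, e \in s -> activated E0 e) ->
  exists i, {subset s <= iter i (bp_step adjH adj) E0}.
Proof.
elim: s => [|e s IH] act_s; first by exists 0.
have [i si] := IH (fun e' e's => act_s e' (mem_behead (s := e :: s) e's)).
have [j ej] := act_s e (mem_head e s).
exists (maxn i j) => e'; rewrite inE => /predU1P [->|e's].
  exact: subsetP (iter_bp_step_subset _ (leq_maxr i j)) _ ej.
exact: subsetP (iter_bp_step_subset _ (leq_maxl i j)) _ (si e' e's).
Qed.

Lemma activated_percolating (E0 : {set {set T}}) :
  E0 \subset edgeset adj -> (forall e, e \in edgeset adj -> activated E0 e) ->
  percolating adjH adj E0.
Proof.
move=> E0G act_G; split=> // e; split=> [/act_G //|[i]].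
exact/subsetP/iter_bp_step_edges.
Qed.

Lemma wsat_le_card (E0 : {set {set T}}) :
  percolating adjH adj E0 -> wsat adjH adj <= #|E0|.
Proof.
move=> perc_E0; apply: geq_bigminn_cond.
by rewrite /percolatingb; case: excluded_middle_informative.
Qed.

Lemma wsat_attained : exists E0, percolating adjH adj E0 /\ #|E0| = wsat adjH adj.
Proof.
apply: (big_ind (fun m => exists E0, percolating adjH adj E0 /\ #|E0| = m)).
- exists (edgeset adj); split=> //.
  by apply: activated_percolating => // e; exists 0.
- by move=> _ _ [E1 [p1 <-]] [E2 [p2 <-]]; rewrite /minn; case: ifP; eauto.
- by move=> E0; rewrite /percolatingb; case: excluded_middle_informative; eauto.
Qed.

End Bootstrap.

Section StarBootstrap.

Variables (T : finType) (adj : rel T).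
Hypotheses (adj_sym : symmetric adj) (adj_irr : irreflexive adj).

Lemma star_step_inv k (E : {set {set T}}) e :
  e \in bp_step (star k.+1) adj E -> e \in E \/
  exists c y (S : {set T}), [/\ e = [set c; y], adj c y, y \notin S, k <= #|S| &
    {in S, forall z, adj c z /\ [set c; z] \in E}].
Proof.
rewrite inE => /orP [eE|]; first by left.
rewrite inE => /andP [_ /existsP [f]].
case/and3P => [/andP [/injectiveP f_inj f_hom] e_f e_sub].
right.
have adj_f i : i != ord0 -> adj (f ord0) (f i).
  move=> i0; move/forallP: f_hom => /(_ ord0) /forallP /(_ i) /implyP; apply.
  by rewrite /star eq_sym i0 eqxx.
have [j j0 e_j] : exists2 j, j != ord0 & e = [set f ord0; f j].
  case/imset2P: e_f => a b _; rewrite inE /star => /and3P [_ ab /orP [] /eqP ab0 ->].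
    by rewrite ab0 in ab *; exists b; rewrite // eq_sym.
  by rewrite ab0 in ab *; exists a; rewrite // setUC.
subst e; exists (f ord0), (f j), (f @: [set i | (i != ord0) && (i != j)]); split.
- by [].
- exact: adj_f.
- by apply/imsetP => -[i]; rewrite inE => /andP [_ ij] /f_inj ji; rewrite ji eqxx in ij.
- rewrite card_imset // (@eq_card _ _ (~: [set ord0; j])) => [|i]; last first.
    by rewrite !inE negb_or.
  have /eqP := cardsC [set ord0; j].
  by rewrite cards2 (eq_sym ord0) j0 card_ord add2n !eqSS => /eqP ->.
- move=> z /imsetP [i]; rewrite inE => /andP [i0 ij] ->; split; first exact: adj_f.
  apply: (subsetP e_sub); rewrite !inE; apply/andP; split.
    apply/negP => /eqP /setP /(_ (f i)); rewrite !inE eqxx orbT => /esym /orP.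
    by case=> /eqP /f_inj /eqP; rewrite ?(negbTE i0) ?(negbTE ij).
  by apply/imset2P; exists ord0 i; rewrite // inE /star eq_sym i0 eqxx.
Qed.

Lemma star_step_fire k (E : {set {set T}}) c y (S : {set T}) :
  adj c y -> {in S, forall z, adj c z} -> y \notin S -> k <= #|S| ->
  {in S, forall z, [set c; z] \in E} -> [set c; y] \in bp_step (star k.+1) adj E.
Proof.
move=> cy cS yS kS SE.
pose s := [:: c, y & enum S].
have s_uniq : uniq s.
  rewrite /= enum_uniq !inE !mem_enum negb_or yS !andbT.
  apply/andP; split; apply/negP; last by move=> /cS; rewrite adj_irr.
  by move=> /eqP cy'; rewrite cy' adj_irr in cy.
pose f := [ffun i : 'I_k.+2 => nth c s i].
have ltn_s (i : 'I_k.+2) : i < size s.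
  by rewrite /= -cardE; apply: leq_trans (ltn_ord i) _; rewrite !ltnS.
pose o1 : 'I_k.+2 := @Ordinal k.+2 1 isT.
have f0 : f ord0 = c by rewrite ffunE.
have f1 : f o1 = y by rewrite ffunE.
have f_S i : i != ord0 -> i != o1 -> f i \in S.
  rewrite ffunE; case: i => [[|[|m]] hm] //= _ _.
  by rewrite -mem_enum mem_nth // -cardE; apply: leq_trans kS; rewrite !ltnS in hm.
have adj_f i : i != ord0 -> adj c (f i).
  by move=> i0; have [->|i1] := eqVneq i o1; [rewrite f1 | exact/cS/f_S].
rewrite inE; apply/orP; right; rewrite inE; apply/andP; split.
  by apply/edgesetP; exists c, y.
apply/existsP; exists f; apply/and3P; split.
- apply/andP; split.
    apply/injectiveP => i j; rewrite !ffunE => /eqP.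
    by rewrite nth_uniq // => /eqP /val_inj.
  apply/forallP => i; apply/forallP => j; apply/implyP; rewrite /star.
  case/andP => ij /orP [] /eqP e0; [subst i | subst j]; rewrite f0.
    by apply: adj_f; rewrite eq_sym.
  by rewrite adj_sym; apply: adj_f.
- by apply/imset2P; exists ord0 o1; rewrite ?inE ?f0 ?f1.
- apply/subsetP => e; rewrite !inE => /andP [ne /imset2P [i j _]].
  rewrite inE /star => /and3P [_ ij /orP [] /eqP e0] e_ij; subst e; [subst i | subst j].
    case: (eqVneq j o1) ne => [-> | j1 _]; first by rewrite f0 f1 eqxx.
    by rewrite f0; apply/SE/f_S; rewrite // eq_sym.
  case: (eqVneq i o1) ne => [-> | i1 _]; first by rewrite f0 f1 setUC eqxx.
  by rewrite f0 setUC; apply/SE/f_S.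
Qed.

Lemma activated_star k (E0 : {set {set T}}) c y (S : {set T}) :
  adj c y -> {in S, forall z, adj c z} -> y \notin S -> k <= #|S| ->
  {in S, forall z, activated (star k.+1) adj E0 [set c; z]} ->
  activated (star k.+1) adj E0 [set c; y].
Proof.
move=> cy cS yS kS act_S.
have [i Si] : exists i, {subset [seq [set c; z] | z <- enum S] <=
                          iter i (bp_step (star k.+1) adj) E0}.
  by apply: activated_seq => _ /mapP [z zS ->]; apply: act_S; rewrite -mem_enum.
exists i.+1; apply: (star_step_fire (S := S)) => // z zS.
by apply: Si; apply: map_f; rewrite mem_enum.
Qed.

Lemma percolating_star1_set0 : percolating (star 1) adj set0.
Proof.
apply: activated_percolating => [|_ /edgesetP [x [y [xy ->]]]]; first exact: sub0set.
by apply: (activated_star (S := set0)) => [|z|||z]; rewrite ?inE.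
Qed.

(* For [k = 0] the pattern [star 1] is a single edge, so from the empty set
   every edge fires at once: this matches the convention [me adj 0 = 0]. *)
Lemma me_attained k : exists A, percolating (star k.+1) adj A /\ #|A| = me adj k.
Proof.
rewrite /me; case: eqP => [->|_]; last exact: wsat_attained.
by exists set0; rewrite cards0; split; last by []; exact: percolating_star1_set0.
Qed.

End StarBootstrap.

Lemma me_le_wsat (T : finType) (adj : rel T) k : me adj k <= wsat (star k.+1) adj.
Proof. by rewrite /me; case: eqP. Qed.

Section CartesianProduct.

Variables (T U : finType) (adjG : rel T) (adjH : rel U).

Lemma cartprod_sym :
  symmetric adjG -> symmetric adjH -> symmetric (cartprod adjG adjH).
Proof.
by move=> symG symH u v; rewrite /cartprod symG symH [u.1 == _]eq_sym [u.2 == _]eq_sym.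
Qed.

Lemma cartprod_irr :
  irreflexive adjG -> irreflexive adjH -> irreflexive (cartprod adjG adjH).
Proof. by move=> irrG irrH u; rewrite /cartprod irrG irrH !andbF. Qed.

Lemma cartprod_layer x y t :
  irreflexive adjH -> cartprod adjG adjH (x, t) (y, t) = adjG x y.
Proof. by move=> irrH; rewrite /cartprod /= irrH andbF eqxx. Qed.

Lemma cartprod_fiber x s t :
  irreflexive adjG -> cartprod adjG adjH (x, s) (x, t) = adjH s t.
Proof. by move=> irrG; rewrite /cartprod /= irrG andbF eqxx orbF. Qed.

End CartesianProduct.

Lemma Kn_sym n : symmetric (Kn n).
Proof. by move=> i j; rewrite /Kn eq_sym. Qed.

Lemma Kn_irr n : irreflexive (Kn n).
Proof. by move=> i; rewrite /Kn eqxx. Qed.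

Definition layer (T U : finType) (t : U) (e : {set T}) : {set T * U} :=
  (fun x => (x, t)) @: e.

Lemma layer_pair (T U : finType) (t : U) (x y : T) :
  layer t [set x; y] = [set (x, t); (y, t)].
Proof. by rewrite /layer imsetU1 imset_set1. Qed.

Lemma mem_layer (T U : finType) (t : U) (e : {set T}) x :
  ((x, t) \in layer t e) = (x \in e).
Proof. by apply/imsetP/idP => [[y ye [->]] | xe] //; exists x. Qed.

Lemma card_layer (T U : finType) (t : U) (e : {set T}) : #|layer t e| = #|e|.
Proof. by rewrite card_imset // => x y []. Qed.

Section Layers.

Variables (T : finType) (adj : rel T) (n r : nat).
Hypotheses (adj_sym : symmetric adj) (adj_irr : irreflexive adj).
Hypothesis mindeg : forall x : T, r <= #|[set y | adj x y]|.
Variable A : 'I_n -> {set {set T}}.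
Hypothesis A_percolating : forall t : 'I_n, percolating (star (r - t).+1) adj (A t).

Local Notation adjP := (cartprod adj (Kn n)).

Let adjP_sym : symmetric adjP := cartprod_sym adj_sym (@Kn_sym n).
Let adjP_irr : irreflexive adjP := cartprod_irr adj_irr (@Kn_irr n).

Let adjP_layer x y t : adjP (x, t) (y, t) = adj x y.
Proof. exact/cartprod_layer/Kn_irr. Qed.

Let adjP_fiber x s t : adjP (x, s) (x, t) = (s != t).
Proof. exact: cartprod_fiber. Qed.

Definition layers_union : {set {set T * 'I_n}} :=
  \bigcup_(t < n) [set layer t e | e in A t].

Local Notation activatedP := (activated (star r.+1) adjP layers_union).

Definition below (c : T) (t : 'I_n) : {set T * 'I_n} :=
  [set (c, s) | s in [set s : 'I_n | s < t]].

Lemma card_below c t : #|below c t| = t.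
Proof. by rewrite card_imset ?card_ord_lt 1?ltnW // => s s' []. Qed.

Lemma layer_below_disjoint c t (S : {set T}) : layer t S :&: below c t = set0.
Proof.
apply/setP => z; rewrite in_setI in_set0.
apply/negbTE/negP => /andP [/imsetP [x _ ->] /imsetP [s]].
by rewrite inE => st [_ ts]; rewrite ts ltnn in st.
Qed.

Definition layer_activated (t : 'I_n) : Prop :=
  forall x y, adj x y -> activatedP [set (x, t); (y, t)].

Lemma fiber_activated s t x :
  s != t -> layer_activated s -> activatedP [set (x, s); (x, t)].
Proof.
move=> st act_s.
apply: (activated_star adjP_sym adjP_irr (S := layer s [set y | adj x y])).
- by rewrite adjP_fiber.
- by move=> z /imsetP [y]; rewrite inE => xy ->; rewrite adjP_layer.
- by apply/imsetP => -[y _ [_ ts]]; rewrite ts eqxx in st.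
- by rewrite card_layer mindeg.
- by move=> z /imsetP [y]; rewrite inE => xy ->; exact: act_s.
Qed.

(* The t active vertical edges at (c, t) make up for the difference between
   the thresholds r and r - t. *)
Lemma layer_lift_activated (t : 'I_n) :
  (forall c, {in below c t, forall z, activatedP [set (c, t); z]}) ->
  forall e, activated (star (r - t).+1) adj (A t) e -> activatedP (layer t e).
Proof.
move=> act_below e [i]; elim: i e => [|i IH] e /=.
  by move=> eA; exists 0; apply/bigcupP; exists t => //; exact: imset_f.
case/star_step_inv => [/IH // | [c [y [S [-> cy yS kS cS]]]]].
rewrite layer_pair.
apply: (activated_star adjP_sym adjP_irr (S := layer t S :|: below c t)).
- by rewrite adjP_layer.
- move=> u /setUP [/imsetP [z /cS [cz _] ->]|/imsetP [s]]; first by rewrite adjP_layer.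
  by rewrite inE => st ->; rewrite adjP_fiber -val_eqE gtn_eqF.
- rewrite inE negb_or mem_layer yS /=.
  by apply/imsetP => -[s]; rewrite inE => st [_ ts]; rewrite ts ltnn in st.
- rewrite cardsU layer_below_disjoint cards0 subn0.
  by rewrite card_layer card_below addnC -leq_subLR.
- move=> u /setUP [/imsetP [z /cS [_ /IH act_z] ->]|]; last exact: act_below.
  by rewrite -layer_pair.
Qed.

Lemma layer_activated_below (t : 'I_n) :
  (forall s : 'I_n, s < t -> layer_activated s) -> layer_activated t.
Proof.
move=> act_below x y xy; rewrite -layer_pair; apply: layer_lift_activated.
  move=> c u /imsetP [s]; rewrite inE => st ->; rewrite setUC.
  by apply: fiber_activated; [rewrite -val_eqE ltn_eqF | exact: act_below].
by apply/(A_percolating t).2/edgesetP; exists x, y.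
Qed.

Lemma layer_activated_all t : layer_activated t.
Proof.
have [m] := ubnP (val t); elim: m t => // m IH t tm.
by apply: layer_activated_below => s st; apply: IH; exact: leq_trans st tm.
Qed.

Lemma layers_union_percolating : percolating (star r.+1) adjP layers_union.
Proof.
apply: activated_percolating.
  apply/bigcupsP => t _; apply/subsetP => f /imsetP [e eA ->].
  have /edgesetP [x [y [xy ->]]] := subsetP (A_percolating t).1 _ eA.
  by rewrite layer_pair; apply/edgesetP; exists (x, t), (y, t); rewrite adjP_layer.
move=> e /edgesetP [[x a] [[y b] [+ ->]]].
case/orP => /andP [/eqP /= <-]; last exact: layer_activated_all.
by move=> ab; apply: fiber_activated ab (layer_activated_all a).
Qed.

Lemma card_layers_union : #|layers_union| <= \sum_(t < n) #|A t|.
Proof.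
apply: (big_ind2 (fun (X : {set _}) m => #|X| <= m)) => [|X1 m1 X2 m2 h1 h2|t _].
- by rewrite cards0.
- exact: leq_trans (leq_card_setU X1 X2).1 (leq_add h1 h2).
- exact: leq_imset_card.
Qed.

End Layers.

Theorem lemma3p5 (T : finType) (adj : rel T)
  (adj_sym : symmetric adj) (adj_irr : irreflexive adj)
  (n r : nat) (n_pos : 0 < n) (r_pos : 0 < r)
  (mindeg : forall x : T, r <= #|[set y | adj x y]|) :
  me (cartprod adj (Kn n)) r <= \sum_(t < n) me adj (r - t).
Proof.
have /fin_all_exists [A A_me] : forall t : 'I_n, exists A : {set {set T}},
    percolating (star (r - t).+1) adj A /\ #|A| = me adj (r - t).
  by move=> t; exact: me_attained.
have A_perc t := (A_me t).1.
apply: leq_trans (me_le_wsat _ _) _.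
have B_perc := layers_union_percolating adj_sym adj_irr mindeg A_perc.
apply: leq_trans (wsat_le_card B_perc) _.
apply: leq_trans (card_layers_union _) _.
by apply: leq_sum => t _; rewrite (A_me t).2.
Qed.
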